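(* For every $b,a\in\mathbb R$, each of the following systems has an isochronous center at the origin $O$ with zero Urabe function: (i) $\dot x=-y+bxy+x^2-bx^3$, $\dot y=x+by^2-2xy+2x^3-bx^4$; (ii) $\dot x=-y+xy-ax^2+ax^3$, $\dot y=x+y^2+2axy+2a^2x^3-a^2x^4$; (iii) $\dot x=-y+xy-ax^2+ax^3$, $\dot y=x+3y^2+2axy-x^2+4ax^2y+\left(\frac13+2a^2\right)x^3+a^2x^4$; (iv) $\dot x=-y+xy-ax^2+ax^3$, $\dot y=x+4y^2+2axy-\frac32x^2+6ax^2y+(1+2a^2)x^3+\left(-\frac14+2a^2\right)x^4$.
   Context: For a real planar polynomial system $\dot x=-y+A(x,y)$, $\dot y=x+B(x,y)$, with $A,B$ polynomials having no terms of degree $<2$, the origin $O$ is an isochronous center if there is a punctured neighborhood of $O$ in which every orbit is a closed orbit surrounding $O$ and all these orbits have the same period. Zero Urabe function: write the system as $\dot x=p_0(x)+p_1(x)y$, $\dot y=q_0(x)+q_1(x)y+q_2(x)y^2$ ($p_0(0)=q_0(0)=0$, $p_1(0)\ne0$), where it holds that $-\frac{p_1'p_0}{p_1}+q_1+p_0'-\frac{2q_2p_0}{p_1}\equiv0$. Put $f=-\frac{q_2+p_1'}{p_1}$, $g=-\frac{q_2p_0^2}{p_1}+q_1p_0-p_1q_0$ (the change $z=p_0+p_1y$ gives $\dot x=z$, $\dot z=-g(x)-f(x)z^2$), $F(x)=\int_0^xf$, and $\xi$ near $0$ by $\frac12\xi(x)^2=\int_0^xg(s)e^{2F(s)}ds$,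 $x\xi(x)>0$ for $x\ne0$. The Urabe function of an isochronous center is the odd analytic $h$ with $\frac{\xi(x)}{1+h(\xi(x))}=g(x)e^{F(x)}$; ''zero Urabe function'' means $h\equiv0$, i.e. $\xi(x)=g(x)e^{F(x)}$ near $0$. *)

From Stdlib Require Import Reals.
Open Scope R_scope.

Definition is_solution (P Q : R -> R -> R) (x y : R -> R) : Prop :=
  forall t, derivable_pt_lim x t (P (x t) (y t)) /\
            derivable_pt_lim y t (Q (x t) (y t)).

(* The orbit through (x0,y0) is a closed orbit of (minimal) period T
   surrounding the origin O: it avoids O and its polar angle (a continuous
   lift theta) changes over one period, i.e. its winding number about O
   is non-zero. *)
Definition closed_orbit_surrounding_O (P Q : R -> R -> R) (x0 y0 T : R) : Prop :=
  exists x y : R -> R,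
    is_solution P Q x y /\ x 0 = x0 /\ y 0 = y0 /\
    (forall t, x (t + T) = x t /\ y (t + T) = y t) /\
    (forall s, 0 < s < T -> ~ (x s = x0 /\ y s = y0)) /\
    (forall t, 0 < x t ^ 2 + y t ^ 2) /\
    exists theta : R -> R,
      (forall t, continuity_pt theta t) /\
      (forall t, x t = sqrt (x t ^ 2 + y t ^ 2) * cos (theta t) /\
                 y t = sqrt (x t ^ 2 + y t ^ 2) * sin (theta t)) /\
      theta T <> theta 0.

Definition isochronous_center (P Q : R -> R -> R) : Prop :=
  exists delta T : R, 0 < delta /\ 0 < T /\
    forall x0 y0, 0 < x0 ^ 2 + y0 ^ 2 < delta ^ 2 ->
      closed_orbit_surrounding_O P Q x0 y0 T.

Definition is_integral (h : R -> R) (a b v : R) : Prop :=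
  exists pr : Riemann_integrable h a b, RiemannInt pr = v.

(* The system is written as
     x' = p0(x) + p1(x) y,  y' = q0(x) + q1(x) y + q2(x) y^2,
   p0(0)=q0(0)=0, p1(0)<>0, with
     -p1' p0/p1 + q1 + p0' - 2 q2 p0/p1 = 0  (wherever p1 <> 0);
   f = -(q2 + p1')/p1, g = -q2 p0^2/p1 + q1 p0 - p1 q0, F(x) = \int_0^x f,
   and xi is defined near 0 by  xi(x)^2/2 = \int_0^x g e^{2F},  x xi(x) > 0
   for x <> 0.  Zero Urabe function means xi(x) = g(x) e^{F(x)} near 0, i.e.
   the function g e^F satisfies the defining conditions of xi near 0
   (xi being uniquely determined by them). *)
Definition zero_urabe (P Q : R -> R -> R) : Prop :=
  exists p0 p1 q0 q1 q2 dp0 dp1 : R -> R,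
    (forall x y, P x y = p0 x + p1 x * y) /\
    (forall x y, Q x y = q0 x + q1 x * y + q2 x * y ^ 2) /\
    p0 0 = 0 /\ q0 0 = 0 /\ p1 0 <> 0 /\
    (forall x, derivable_pt_lim p0 x (dp0 x)) /\
    (forall x, derivable_pt_lim p1 x (dp1 x)) /\
    (forall x, p1 x <> 0 ->
       - dp1 x * p0 x / p1 x + q1 x + dp0 x - 2 * q2 x * p0 x / p1 x = 0) /\
    let f := fun x => - (q2 x + dp1 x) / p1 x in
    let g := fun x => - q2 x * p0 x ^ 2 / p1 x + q1 x * p0 x - p1 x * q0 x in
    exists (delta : R) (F : R -> R), 0 < delta /\
      (forall x, - delta < x < delta -> is_integral f 0 x (F x)) /\
      (forall x, - delta < x < delta ->
         is_integral (fun s => g s * exp (2 * F s)) 0 x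
                     (/ 2 * (g x * exp (F x)) ^ 2)) /\
      (forall x, - delta < x < delta -> x <> 0 -> 0 < x * (g x * exp (F x))).

Definition isochronous_center_zero_urabe (P Q : R -> R -> R) : Prop :=
  isochronous_center P Q /\ zero_urabe P Q.

(* Each system is conjugate near [O] to the rotation [u' = v, v' = - u] by an
   explicit change of variables [(x, y) = (X u v, Y u v)]: for (i)
   [X = u / (1 + b u)], [Y = X^2 - v / (1 + b u)]; for (ii)-(iv), members [k = 1, 3, 4]
   of one family, [X = 1 - (1 + k u)^(-1/k)], [Y = - a X^2 - v / (1 + k u)].
   The orbits near [O] are thus images of circles, all closed with period [2 PI], and
   they wind around [O] because [(x, y)] stays in the open half plane facing [(u, - v)].
   For the Urabe function, [F = int f] is a logarithm and [g] has a closed form with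
   [g' + g f = 1], i.e. [(g e^F)' = e^F], which integrates to [xi = g e^F]. *)

From Stdlib Require Import Reals Lra Lia Psatz FunctionalExtensionality.
From Coquelicot Require Import Coquelicot.
Open Scope R_scope.

Lemma is_integral_of_derive (h H : R -> R) (a b : R) :
  (forall s, Rmin a b <= s <= Rmax a b ->
     continuity_pt h s /\ derivable_pt_lim H s (h s)) ->
  is_integral h a b (H b - H a).
Proof.
  intros Hh.
  assert (Hint : is_RInt h a b (H b - H a)).
  { apply (is_RInt_derive H h); intros s Hs; destruct (Hh s Hs) as [Hc Hd].
    - now apply is_derive_Reals.
    - now apply continuity_pt_filterlim. }
  exists (ex_RInt_Reals_0 _ _ _ (ex_intro _ _ Hint)).
  rewrite <- RInt_Reals; exact (is_RInt_unique _ _ _ _ Hint).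
Qed.

Lemma between_0_in_interval d x s :
  - d < x < d -> Rmin 0 x <= s <= Rmax 0 x -> - d < s < d.
Proof. unfold Rmin, Rmax; destruct (Rle_dec 0 x); lra. Qed.

Lemma continuity_pt_of_ex_derive (f : R -> R) (x : R) :
  ex_derive f x -> continuity_pt f x.
Proof. intro H; apply continuity_pt_filterlim; exact (ex_derive_continuous f x H). Qed.

(* If [F' = f] and [G' = 1 - G f], then [(G e^F)' = e^F], so that
   [(1/2 (G e^F)^2)' = G e^(2F)]: this is the zero Urabe identity. *)
Lemma is_integral_half_square (f F G g : R -> R) (d x : R) :
  G 0 = 0 -> F 0 = 0 ->
  (forall s, - d < s < d ->
     g s = G s /\ continuity_pt f s /\ derivable_pt_lim F s (f s) /\
     derivable_pt_lim G s (1 - G s * f s)) ->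
  - d < x < d ->
  is_integral (fun s => g s * exp (2 * F s)) 0 x (/ 2 * (g x * exp (F x)) ^ 2).
Proof.
  intros HG0 HF0 Hder Hx.
  replace (/ 2 * (g x * exp (F x)) ^ 2)
    with (/ 2 * (G x * exp (F x)) ^ 2 - / 2 * (G 0 * exp (F 0)) ^ 2)
    by (rewrite HG0, (proj1 (Hder x Hx)); ring).
  apply (is_integral_of_derive _ (fun s => / 2 * (G s * exp (F s)) ^ 2)).
  intros s Hs; assert (Hsd := between_0_in_interval d x s Hx Hs).
  destruct (Hder s Hsd) as (Hgs & Hf & HF & HG).
  apply is_derive_Reals in HF; apply is_derive_Reals in HG.
  split.
  - apply (continuity_pt_locally_ext (fun s => G s * exp (2 * F s)) _
             (Rmin (s + d) (d - s))).
    + apply Rmin_pos; lra.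
    + intros y Hy; unfold Rdist in Hy.
      assert (Hy1 := Rlt_le_trans _ _ _ Hy (Rmin_l _ _)).
      assert (Hy2 := Rlt_le_trans _ _ _ Hy (Rmin_r _ _)).
      apply Rabs_def2 in Hy1; apply Rabs_def2 in Hy2.
      symmetry; f_equal; apply (Hder y); lra.
    + apply continuity_pt_of_ex_derive; auto_derive.
      repeat split; eexists; eassumption.
  - cbv beta; rewrite Hgs; apply is_derive_Reals; auto_derive.
    + repeat split; eexists; eassumption.
    + replace (Derive (fun x => G x) s) with (1 - G s * f s)
        by (symmetry; now apply is_derive_unique).
      replace (Derive (fun x => F x) s) with (f s)
        by (symmetry; now apply is_derive_unique).
      replace (2 * F s) with (F s + F s) by ring; rewrite exp_plus; field.
Qed.

(* [G] is the function [g] of the definition, given near [0] by a closed form;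
   the zero Urabe condition [xi = g e^F] is then the linear ODE [G' = 1 - G f]. *)
Lemma zero_urabe_intro (P Q : R -> R -> R) (p0 p1 q0 q1 q2 dp0 dp1 F G : R -> R) (d : R) :
  (forall x y, P x y = p0 x + p1 x * y) ->
  (forall x y, Q x y = q0 x + q1 x * y + q2 x * y ^ 2) ->
  p0 0 = 0 -> q0 0 = 0 -> p1 0 <> 0 ->
  (forall x, derivable_pt_lim p0 x (dp0 x)) ->
  (forall x, derivable_pt_lim p1 x (dp1 x)) ->
  (forall x, p1 x <> 0 ->
     - dp1 x * p0 x / p1 x + q1 x + dp0 x - 2 * q2 x * p0 x / p1 x = 0) ->
  0 < d -> F 0 = 0 ->
  (forall x, - d < x < d ->
     G x = - q2 x * p0 x ^ 2 / p1 x + q1 x * p0 x - p1 x * q0 x /\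
     continuity_pt (fun x => - (q2 x + dp1 x) / p1 x) x /\
     derivable_pt_lim F x (- (q2 x + dp1 x) / p1 x) /\
     derivable_pt_lim G x (1 - G x * (- (q2 x + dp1 x) / p1 x))) ->
  (forall x, - d < x < d -> x <> 0 -> 0 < x * G x) ->
  zero_urabe P Q.
Proof.
  intros HP HQ Hp00 Hq00 Hp10 Hdp0 Hdp1 Hcomp Hd HF0 HG HGpos.
  exists p0, p1, q0, q1, q2, dp0, dp1.
  do 8 (split; [assumption |]); cbv zeta.
  assert (HG0 : G 0 = 0)
    by (rewrite (proj1 (HG 0 ltac:(lra))), Hp00, Hq00; unfold Rdiv; ring).
  exists d, F; split; [exact Hd |]; split; [| split].
  - intros x Hx; replace (F x) with (F x - F 0) by (rewrite HF0; ring).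
    apply is_integral_of_derive; intros s Hs.
    now destruct (HG s (between_0_in_interval d x s Hx Hs)) as (_ & Hf & HFd & _).
  - intros x Hx.
    apply (is_integral_half_square (fun s => - (q2 s + dp1 s) / p1 s) F G
             (fun s => - q2 s * p0 s ^ 2 / p1 s + q1 s * p0 s - p1 s * q0 s) d);
      [exact HG0 | exact HF0 | | exact Hx].
    intros s Hs; destruct (HG s Hs) as (HGs & Hf & HFd & HGd); now repeat split.
  - intros x Hx Hx0; rewrite <- (proj1 (HG x Hx)), <- Rmult_assoc.
    apply Rmult_lt_0_compat; [now apply HGpos | apply exp_pos].
Qed.

Lemma sum_sq_pos a b : ~ (a = 0 /\ b = 0) -> 0 < a ^ 2 + b ^ 2.
Proof.
  intro Hab; assert (H : a ^ 2 + b ^ 2 <> 0)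
    by (intro H; apply Hab, Rplus_sqr_eq_0; now rewrite !Rsqr_pow2).
  assert (0 <= a ^ 2) by apply pow2_ge_0; assert (0 <= b ^ 2) by apply pow2_ge_0; lra.
Qed.

Lemma Rabs_lt_of_sum_sq x y d : 0 < d -> x ^ 2 + y ^ 2 < d ^ 2 -> Rabs x < d /\ Rabs y < d.
Proof. intros Hd Hxy; split; apply Rabs_def1; nra. Qed.

Lemma continuity_pt_near (f : R -> R) (x0 eps : R) :
  continuity_pt f x0 -> 0 < eps -> locally x0 (fun x => Rabs (f x - f x0) < eps).
Proof. intros Hf He; exact (proj1 (continuity_pt_locally f x0) Hf (mkposreal eps He)). Qed.

Definition rot_u (u0 v0 t : R) : R := u0 * cos t + v0 * sin t.

Definition rot_v (u0 v0 t : R) : R := v0 * cos t - u0 * sin t.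

Lemma rot_norm u0 v0 t : rot_u u0 v0 t ^ 2 + rot_v u0 v0 t ^ 2 = u0 ^ 2 + v0 ^ 2.
Proof.
  unfold rot_u, rot_v; assert (H := sin2_cos2 t); unfold Rsqr in H.
  transitivity ((u0 ^ 2 + v0 ^ 2) * (sin t * sin t + cos t * cos t)); [ring |].
  rewrite H; ring.
Qed.

Lemma rot_periodic u0 v0 t :
  rot_u u0 v0 (t + 2 * PI) = rot_u u0 v0 t /\ rot_v u0 v0 (t + 2 * PI) = rot_v u0 v0 t.
Proof. unfold rot_u, rot_v; rewrite cos_plus, sin_plus, cos_2PI, sin_2PI; split; ring. Qed.

Lemma rot_no_fixed_point u0 v0 s : 0 < u0 ^ 2 + v0 ^ 2 -> 0 < s < 2 * PI ->
  ~ (rot_u u0 v0 s = u0 /\ rot_v u0 v0 s = v0).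
Proof.
  unfold rot_u, rot_v; intros Huv Hs [Hu Hv].
  assert (Hcos : (u0 ^ 2 + v0 ^ 2) * (cos s - 1) = 0).
  { transitivity (u0 * (u0 * cos s + v0 * sin s - u0) + v0 * (v0 * cos s - u0 * sin s - v0));
      [ring | rewrite Hu, Hv; ring]. }
  assert (Hsin : (u0 ^ 2 + v0 ^ 2) * sin s = 0).
  { transitivity (v0 * (u0 * cos s + v0 * sin s - u0) - u0 * (v0 * cos s - u0 * sin s - v0));
      [ring | rewrite Hu, Hv; ring]. }
  apply Rmult_integral in Hcos; apply Rmult_integral in Hsin.
  destruct (Rtotal_order s PI) as [H | [-> | H]].
  - assert (0 < sin s) by (apply sin_gt_0; lra); lra.
  - rewrite cos_PI in Hcos; lra.
  - assert (sin s < 0) by (apply sin_lt_0; lra); lra.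
Qed.

Lemma polar_angle u v : 0 < u ^ 2 + v ^ 2 ->
  exists al, cos al = u / sqrt (u ^ 2 + v ^ 2) /\ sin al = v / sqrt (u ^ 2 + v ^ 2).
Proof.
  intros Huv; set (r := sqrt (u ^ 2 + v ^ 2)).
  assert (Hr : 0 < r) by (apply sqrt_lt_R0; lra).
  assert (Hr2 : r ^ 2 = u ^ 2 + v ^ 2) by (unfold r; rewrite <- Rsqr_pow2; apply Rsqr_sqrt; lra).
  assert (Hsum : (u / r) ^ 2 + (v / r) ^ 2 = 1) by (field_simplify; [rewrite Hr2; field |]; lra).
  assert (Hc : -1 <= u / r <= 1) by nra.
  assert (Hs : sqrt (1 - (u / r)²) = Rabs (v / r)).
  { rewrite <- sqrt_Rsqr_abs, Rsqr_pow2, Rsqr_pow2; f_equal; lra. }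
  destruct (Rle_dec 0 v) as [Hv | Hv].
  - exists (acos (u / r)); rewrite cos_acos, sin_acos, Hs by exact Hc.
    split; [reflexivity |]; apply Rabs_pos_eq; unfold Rdiv; apply Rmult_le_pos;
      [lra | left; now apply Rinv_0_lt_compat].
  - exists (- acos (u / r)); rewrite cos_neg, sin_neg, cos_acos, sin_acos, Hs by exact Hc.
    split; [reflexivity |]; rewrite Rabs_left; [ring |].
    unfold Rdiv; apply Rmult_neg_pos; [lra | now apply Rinv_0_lt_compat].
Qed.

(* [q] is the slope of [(x, y)] in the frame rotated by [beta]. *)
Lemma polar_half_plane beta x y : 0 < x * cos beta + y * sin beta ->
  let q := (y * cos beta - x * sin beta) / (x * cos beta + y * sin beta) in
  x = sqrt (x ^ 2 + y ^ 2) * cos (beta + atan q) /\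
  y = sqrt (x ^ 2 + y ^ 2) * sin (beta + atan q).
Proof.
  intros HD q; rewrite cos_plus, sin_plus, cos_atan, sin_atan.
  set (D := x * cos beta + y * sin beta) in *.
  set (C := y * cos beta - x * sin beta) in q.
  assert (Hcs := sin2_cos2 beta); unfold Rsqr in Hcs.
  assert (HDC : D ^ 2 + C ^ 2 = x ^ 2 + y ^ 2) by (unfold D, C; nra).
  assert (Hxy : 0 < x ^ 2 + y ^ 2) by nra.
  set (r := sqrt (x ^ 2 + y ^ 2)).
  assert (Hr : 0 < r) by (apply sqrt_lt_R0; lra).
  assert (Hr2 : r ^ 2 = x ^ 2 + y ^ 2) by (unfold r; rewrite <- Rsqr_pow2; apply Rsqr_sqrt; lra).
  assert (Hq : sqrt (1 + q²) = r / D).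
  { rewrite <- (sqrt_pow2 (r / D)) by (unfold Rdiv; apply Rmult_le_pos;
      [lra | left; now apply Rinv_0_lt_compat]).
    f_equal; unfold q, Rsqr; field_simplify; [| lra..].
    now rewrite Hr2, <- HDC, Rplus_comm. }
  rewrite Hq; unfold q, C, D in *; split; field_simplify; try (split; lra);
    match goal with |- ?z = _ =>
      transitivity (z * (sin beta * sin beta + cos beta * cos beta)); [rewrite Hcs |]; ring
    end.
Qed.

Lemma closed_orbit_of_rotation (P Q X Y : R -> R -> R) (u0 v0 : R) :
  let x t := X (rot_u u0 v0 t) (rot_v u0 v0 t) in
  let y t := Y (rot_u u0 v0 t) (rot_v u0 v0 t) in
  0 < u0 ^ 2 + v0 ^ 2 ->
  is_solution P Q x y ->
  (forall t, x t = X u0 v0 -> y t = Y u0 v0 -> rot_u u0 v0 t = u0 /\ rot_v u0 v0 t = v0) ->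
  (forall t, 0 < x t * rot_u u0 v0 t - y t * rot_v u0 v0 t) ->
  closed_orbit_surrounding_O P Q (X u0 v0) (Y u0 v0) (2 * PI).
Proof.
  intros x y Huv Hsol Hinj Hdot.
  assert (Hrot0 : rot_u u0 v0 0 = u0 /\ rot_v u0 v0 0 = v0)
    by (unfold rot_u, rot_v; rewrite cos_0, sin_0; split; ring).
  assert (Hx0 : x 0 = X u0 v0) by (unfold x; now rewrite (proj1 Hrot0), (proj2 Hrot0)).
  assert (Hy0 : y 0 = Y u0 v0) by (unfold y; now rewrite (proj1 Hrot0), (proj2 Hrot0)).
  assert (Hper : forall t, x (t + 2 * PI) = x t /\ y (t + 2 * PI) = y t)
    by (intro t; unfold x, y; destruct (rot_periodic u0 v0 t) as [-> ->]; split; reflexivity).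
  destruct (polar_angle u0 v0 Huv) as [al [Hcal Hsal]].
  set (rho := sqrt (u0 ^ 2 + v0 ^ 2)) in *.
  assert (Hrho : 0 < rho) by (apply sqrt_lt_R0; lra).
  (* [t - al] is the polar angle of [(rot_u t, - rot_v t)] *)
  assert (Hhalf : forall t, 0 < x t * cos (t - al) + y t * sin (t - al)).
  { intro t; rewrite cos_minus, sin_minus, Hcal, Hsal.
    replace (x t * (cos t * (u0 / rho) + sin t * (v0 / rho)) +
             y t * (sin t * (u0 / rho) - cos t * (v0 / rho)))
      with ((x t * rot_u u0 v0 t - y t * rot_v u0 v0 t) / rho)
      by (unfold rot_u, rot_v; field; lra).
    apply Rdiv_lt_0_compat; [apply Hdot | exact Hrho]. }
  set (q t := (y t * cos (t - al) - x t * sin (t - al)) /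
              (x t * cos (t - al) + y t * sin (t - al))).
  exists x, y; split; [exact Hsol |].
  split; [exact Hx0 |]; split; [exact Hy0 |]; split; [exact Hper |].
  split.
  { intros s Hs [Hxs Hys].
    exact (rot_no_fixed_point u0 v0 s Huv Hs (Hinj s Hxs Hys)). }
  split.
  { intro t; apply sum_sq_pos; intros [Hx Hy].
    specialize (Hhalf t); rewrite Hx, Hy in Hhalf; lra. }
  exists (fun t => (t - al) + atan (q t)).
  split; [| split].
  - intro t; destruct (Hsol t) as [Dx Dy].
    apply continuity_pt_of_ex_derive; unfold q; auto_derive.
    repeat split; try (eexists; apply is_derive_Reals; eassumption).
    specialize (Hhalf t); unfold Rminus in Hhalf; lra.
  - intro t; exact (polar_half_plane (t - al) (x t) (y t) (Hhalf t)).
  - assert (Hq : q (2 * PI) = q 0).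
    { destruct (Hper 0) as [Hx2 Hy2]; rewrite Rplus_0_l in Hx2, Hy2.
      unfold q; replace (2 * PI - al) with ((0 - al) + 2 * PI) by ring.
      rewrite Hx2, Hy2, cos_plus, sin_plus, cos_2PI, sin_2PI.
      f_equal; ring. }
    rewrite Hq; assert (PI_RGT_0 := PI_RGT_0); lra.
Qed.

Lemma isochronous_center_of_linearization (P Q X Y : R -> R -> R) (rho : R) :
  (forall u0 v0, u0 ^ 2 + v0 ^ 2 < rho ^ 2 ->
     is_solution P Q (fun t => X (rot_u u0 v0 t) (rot_v u0 v0 t))
                     (fun t => Y (rot_u u0 v0 t) (rot_v u0 v0 t))) ->
  (forall u v u' v', u ^ 2 + v ^ 2 < rho ^ 2 -> u' ^ 2 + v' ^ 2 < rho ^ 2 ->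
     X u v = X u' v' -> Y u v = Y u' v' -> u = u' /\ v = v') ->
  (forall u v, 0 < u ^ 2 + v ^ 2 < rho ^ 2 -> 0 < X u v * u - Y u v * v) ->
  (exists delta, 0 < delta /\ forall x y, 0 < x ^ 2 + y ^ 2 < delta ^ 2 ->
     exists u v, 0 < u ^ 2 + v ^ 2 < rho ^ 2 /\ X u v = x /\ Y u v = y) ->
  isochronous_center P Q.
Proof.
  intros Hsol Hinj Hdot [delta [Hdelta Hcover]].
  assert (HPI := PI_RGT_0).
  exists delta, (2 * PI); split; [exact Hdelta |]; split; [lra |].
  intros x0 y0 Hxy0; destruct (Hcover x0 y0 Hxy0) as (u0 & v0 & Huv & <- & <-).
  apply closed_orbit_of_rotation; [lra | apply Hsol; lra | |].
  - intros t; apply Hinj; [rewrite rot_norm | ..]; lra.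
  - intro t; apply Hdot; rewrite rot_norm; lra.
Qed.

Lemma cover_of_right_inverse (X Y : R -> R -> R) (f g h : R -> R) (rho delta0 : R) :
  0 < rho -> 0 < delta0 ->
  X 0 0 = 0 -> Y 0 0 = 0 ->
  (forall x y, - delta0 < x < delta0 ->
     X (f x) (g x + h x * y) = x /\ Y (f x) (g x + h x * y) = y) ->
  continuity_pt f 0 -> continuity_pt g 0 -> continuity_pt h 0 -> f 0 = 0 -> g 0 = 0 ->
  exists delta, 0 < delta /\ forall x y, 0 < x ^ 2 + y ^ 2 < delta ^ 2 ->
    exists u v, 0 < u ^ 2 + v ^ 2 < rho ^ 2 /\ X u v = x /\ Y u v = y.
Proof.
  intros Hrho Hdelta0 HX0 HY0 Hinv Hf Hg Hh Hf0 Hg0.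
  assert (Hh0 := Rabs_pos (h 0)).
  assert (Hrho2 : 0 < rho / 2) by lra; assert (Hrho4 : 0 < rho / 4) by lra.
  destruct (filter_and _ _ (continuity_pt_near f 0 _ Hf Hrho2)
             (filter_and _ _ (continuity_pt_near g 0 _ Hg Hrho4)
                             (continuity_pt_near h 0 1 Hh Rlt_0_1)))
    as [e He].
  set (c := rho / (4 * (Rabs (h 0) + 1))).
  assert (Hc : 0 < c) by (unfold c; apply Rdiv_lt_0_compat; lra).
  exists (Rmin delta0 (Rmin e c)).
  split; [apply Rmin_pos; [lra | apply Rmin_pos; [apply cond_pos | exact Hc]] |].
  intros x y [Hxy0 Hxy].
  assert (Hd := Rmin_pos _ _ Hdelta0 (Rmin_pos _ _ (cond_pos e) Hc)).
  destruct (Rabs_lt_of_sum_sq x y _ Hd Hxy) as [Hx Hy].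
  assert (Hmin1 := Rmin_l delta0 (Rmin e c)); assert (Hmin2 := Rmin_r delta0 (Rmin e c)).
  assert (Hmin3 := Rmin_l e c); assert (Hmin4 := Rmin_r e c).
  assert (Hxe : ball 0 e x) by (change (Rabs (x - 0) < e); rewrite Rminus_0_r; lra).
  destruct (He x Hxe) as (Hfx & Hgx & Hhx).
  rewrite Hf0, Rminus_0_r in Hfx; rewrite Hg0, Rminus_0_r in Hgx.
  assert (Hxd : - delta0 < x < delta0) by (apply Rabs_lt_between; lra).
  destruct (Hinv x y Hxd) as [HX HY].
  exists (f x), (g x + h x * y); split; [split |]; [| | exact (conj HX HY)].
  - apply sum_sq_pos; intros [Hu Hv]; rewrite Hu, Hv in HX, HY.
    rewrite HX0 in HX; rewrite HY0 in HY; subst; lra.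
  - assert (Hhy : Rabs (h x * y) <= rho / 4).
    { rewrite Rabs_mult.
      assert (Rabs (h x) <= Rabs (h 0) + 1).
      { replace (h x) with ((h x - h 0) + h 0) by ring.
        eapply Rle_trans; [apply Rabs_triang | lra]. }
      apply Rle_trans with ((Rabs (h 0) + 1) * c).
      - apply Rmult_le_compat; try apply Rabs_pos; lra.
      - unfold c; apply Req_le; field; lra. }
    assert (Hv : Rabs (g x + h x * y) < rho / 2)
      by (eapply Rle_lt_trans; [apply Rabs_triang | lra]).
    apply Rabs_def2 in Hfx; apply Rabs_def2 in Hv; nra.
Qed.

Lemma injective_of_left_inverse (X Y : R -> R -> R) (f g h : R -> R) (rho : R) :
  (forall u v, u ^ 2 + v ^ 2 < rho ^ 2 ->
     f (X u v) = u /\ g (X u v) + h (X u v) * Y u v = v) ->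
  forall u v u' v', u ^ 2 + v ^ 2 < rho ^ 2 -> u' ^ 2 + v' ^ 2 < rho ^ 2 ->
    X u v = X u' v' -> Y u v = Y u' v' -> u = u' /\ v = v'.
Proof.
  intros Hinv u v u' v' Huv Huv' HX HY.
  destruct (Hinv u v Huv) as [Hu Hv]; destruct (Hinv u' v' Huv') as [Hu' Hv'].
  split; congruence.
Qed.

(* Both linearizations below have the shape [X = m u], [Y = - c X^2 - z v]. *)
Lemma rotation_dot_pos m c z u v :
  0 < m -> 0 < z -> 2 * Rabs c * m * Rabs v <= 1 -> 0 < u ^ 2 + v ^ 2 ->
  0 < m * u * u - (- c * (m * u) ^ 2 - z * v) * v.
Proof.
  intros Hm Hz Hcv Huv.
  assert (Hcmv : - (1 / 2) <= c * m * v).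
  { assert (Rabs (c * m * v) <= 1 / 2)
      by (rewrite !Rabs_mult, (Rabs_pos_eq m) by lra; lra).
    apply Rabs_le_between in H; lra. }
  replace (m * u * u - (- c * (m * u) ^ 2 - z * v) * v)
    with (m * u ^ 2 * (1 + c * m * v) + z * v ^ 2) by ring.
  assert (0 <= v ^ 2) by apply pow2_ge_0.
  destruct (Rle_lt_or_eq_dec 0 (u ^ 2) (pow2_ge_0 u)) as [Hu | Hu].
  - assert (0 < m * u ^ 2) by (apply Rmult_lt_0_compat; lra); nra.
  - rewrite <- Hu; nra.
Qed.

Lemma one_plus_mul_ge c u r : Rabs u <= r -> Rabs c * r <= / 4 -> 3 / 4 <= 1 + c * u.
Proof.
  intros Hu Hcr.
  assert (Rabs (c * u) <= / 4).
  { rewrite Rabs_mult; eapply Rle_trans; [| exact Hcr].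
    apply Rmult_le_compat_l; [apply Rabs_pos | exact Hu]. }
  apply Rabs_le_between in H; lra.
Qed.

Section FirstSystem.

Variable b : R.

Let P (x y : R) : R := - y + b * x * y + x ^ 2 - b * x ^ 3.
Let Q (x y : R) : R := x + b * y ^ 2 - 2 * x * y + 2 * x ^ 3 - b * x ^ 4.

Definition lin1_x (u v : R) : R := u / (1 + b * u).
Definition lin1_y (u v : R) : R := (u / (1 + b * u)) ^ 2 - v / (1 + b * u).

Definition lin1_inv_f (x : R) : R := x / (1 - b * x).
Definition lin1_inv_g (x : R) : R := x ^ 2 / (1 - b * x).
Definition lin1_inv_h (x : R) : R := - / (1 - b * x).

Let rho : R := / (4 * (1 + Rabs b)).

Lemma lin1_rho_pos : 0 < rho.
Proof. assert (H := Rabs_pos b); unfold rho; apply Rinv_0_lt_compat; lra. Qed.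

Lemma lin1_rho_bound : rho + Rabs b * rho = / 4.
Proof. assert (H := Rabs_pos b); unfold rho; field; lra. Qed.

Lemma lin1_denominator_ge c u : Rabs c = Rabs b -> Rabs u <= rho -> 3 / 4 <= 1 + c * u.
Proof.
  intros Hc Hu; apply (one_plus_mul_ge c u rho Hu); rewrite Hc.
  assert (H := lin1_rho_bound); assert (H0 := lin1_rho_pos); lra.
Qed.

Lemma lin1_denominator u v : u ^ 2 + v ^ 2 < rho ^ 2 -> 3 / 4 <= 1 + b * u.
Proof.
  intro Huv; destruct (Rabs_lt_of_sum_sq u v rho lin1_rho_pos Huv) as [Hu _].
  apply lin1_denominator_ge; [reflexivity | lra].
Qed.

Lemma lin1_inv_denominator x : - rho < x < rho -> 3 / 4 <= 1 - b * x.
Proof.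
  intro Hx; replace (1 - b * x) with (1 + - b * x) by ring.
  apply lin1_denominator_ge; [apply Rabs_Ropp | apply Rabs_le_between; lra].
Qed.

Lemma lin1_solution u0 v0 : u0 ^ 2 + v0 ^ 2 < rho ^ 2 ->
  is_solution P Q (fun t => lin1_x (rot_u u0 v0 t) (rot_v u0 v0 t))
                  (fun t => lin1_y (rot_u u0 v0 t) (rot_v u0 v0 t)).
Proof.
  intros Huv t; rewrite <- (rot_norm u0 v0 t) in Huv.
  assert (Hden := lin1_denominator _ _ Huv).
  unfold P, Q, lin1_x, lin1_y, rot_u, rot_v in *.
  split; apply is_derive_Reals; auto_derive; try lra; field; lra.
Qed.

Lemma lin1_left_inverse u v : u ^ 2 + v ^ 2 < rho ^ 2 ->
  lin1_inv_f (lin1_x u v) = u /\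
  lin1_inv_g (lin1_x u v) + lin1_inv_h (lin1_x u v) * lin1_y u v = v.
Proof.
  intro Huv; assert (Hden := lin1_denominator u v Huv).
  assert (H1 : 1 - b * lin1_x u v = / (1 + b * u)) by (unfold lin1_x; field; lra).
  unfold lin1_inv_f, lin1_inv_g, lin1_inv_h; rewrite H1.
  unfold lin1_y; fold (lin1_x u v); unfold lin1_x.
  split; field; lra.
Qed.

Lemma lin1_dot u v : 0 < u ^ 2 + v ^ 2 < rho ^ 2 -> 0 < lin1_x u v * u - lin1_y u v * v.
Proof.
  intros [Huv0 Huv]; assert (Hden := lin1_denominator u v Huv).
  set (z := / (1 + b * u)).
  assert (Hz : 0 < z <= 4 / 3).
  { unfold z; split; [apply Rinv_0_lt_compat; lra |].
    apply (Rmult_le_reg_r (1 + b * u)); [lra |]; field_simplify; lra. }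
  replace (lin1_x u v * u - lin1_y u v * v)
    with (z * u * u - (- (-1) * (z * u) ^ 2 - z * v) * v)
    by (unfold lin1_x, lin1_y, z; field; lra).
  apply rotation_dot_pos; try lra.
  destruct (Rabs_lt_of_sum_sq u v rho lin1_rho_pos Huv) as [_ Hv].
  assert (Hrho : rho <= / 4).
  { assert (0 <= Rabs b * rho) by (apply Rmult_le_pos; [apply Rabs_pos | left; exact lin1_rho_pos]).
    assert (Hbound := lin1_rho_bound); lra. }
  rewrite Rabs_left by lra; nra.
Qed.

Lemma first_system_isochronous : isochronous_center P Q.
Proof.
  apply (isochronous_center_of_linearization _ _ lin1_x lin1_y rho).
  - exact lin1_solution.
  - exact (injective_of_left_inverse lin1_x lin1_y _ _ _ rho lin1_left_inverse).
  - exact lin1_dot.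
  - apply (cover_of_right_inverse _ _ lin1_inv_f lin1_inv_g lin1_inv_h rho rho
             lin1_rho_pos lin1_rho_pos);
      try (unfold lin1_x, lin1_y, lin1_inv_f, lin1_inv_g; field;
           replace (1 - b * 0) with 1 by ring; lra).
    2-4: apply continuity_pt_of_ex_derive; unfold lin1_inv_f, lin1_inv_g, lin1_inv_h;
      auto_derive; lra.
    intros x y Hx; assert (Hden := lin1_inv_denominator x Hx).
    unfold lin1_x, lin1_y, lin1_inv_f, lin1_inv_g, lin1_inv_h.
    replace (1 + b * (x / (1 - b * x))) with (/ (1 - b * x)) by (field; lra).
    split; field; lra.
Qed.

Lemma first_system_zero_urabe : zero_urabe P Q.
Proof.
  apply (zero_urabe_intro P Q (fun x => x ^ 2 - b * x ^ 3) (fun x => b * x - 1)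
           (fun x => x + 2 * x ^ 3 - b * x ^ 4) (fun x => - 2 * x) (fun _ => b)
           (fun x => 2 * x - 3 * b * x ^ 2) (fun _ => b)
           (fun x => - 2 * ln (1 - b * x)) (fun x => x * (1 - b * x)) rho);
    try (intros; unfold P, Q; ring).
  - lra.
  - intro x; apply is_derive_Reals; auto_derive; [exact I | ring].
  - intro x; apply is_derive_Reals; auto_derive; [exact I | ring].
  - intros x Hx; field; exact Hx.
  - exact lin1_rho_pos.
  - rewrite Rmult_0_r, Rminus_0_r, ln_1; ring.
  - intros x Hx; assert (Hden := lin1_inv_denominator x Hx); repeat split.
    + field; lra.
    + apply continuity_pt_of_ex_derive; auto_derive; lra.
    + apply is_derive_Reals; auto_derive; [lra | field; lra].
    + apply is_derive_Reals; auto_derive; [exact I | field; lra].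
  - intros x Hx Hx0; assert (Hden := lin1_inv_denominator x Hx).
    replace (x * (x * (1 - b * x))) with (x ^ 2 * (1 - b * x)) by ring.
    apply Rmult_lt_0_compat; [rewrite <- Rsqr_pow2; now apply Rsqr_pos_lt | lra].
Qed.

End FirstSystem.

Lemma one_sub_pow_factor w k : 0 < w -> (0 < k)%nat ->
  exists S, 1 <= S /\ 1 - w ^ k = (1 - w) * S.
Proof.
  intros Hw Hk; induction k as [| k IH]; [lia |].
  destruct (Nat.eq_dec k 0) as [-> | Hk0].
  - exists 1; split; [lra | simpl; ring].
  - destruct IH as [S [HS E]]; [lia |]; exists (1 + w * S); split.
    + assert (0 < w * S) by (apply Rmult_lt_0_compat; lra); lra.
    + simpl pow; transitivity ((1 - w) + w * (1 - w ^ k)); [ring | rewrite E; ring].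
Qed.

Section CubicFamily.

Variables (a : R) (k : nat).
Hypothesis Hk : (0 < k)%nat.

Let P (x y : R) : R := - y + x * y - a * x ^ 2 + a * x ^ 3.

(* Systems (ii), (iii) and (iv) are [x' = P x y, y' = family_Q x y] for [k = 1, 3, 4]. *)
Definition family_Q (x y : R) : R :=
  (1 - (1 - x) ^ k) / INR k + 2 * a ^ 2 * x ^ 3 + (INR k - 2) * a ^ 2 * x ^ 4
  + (2 * a * x + 2 * (INR k - 1) * a * x ^ 2) * y + INR k * y ^ 2.

Definition lin2_w (u : R) : R := Rpower (1 + INR k * u) (- / INR k).
Definition lin2_x (u v : R) : R := 1 - lin2_w u.
Definition lin2_y (u v : R) : R := - a * (1 - lin2_w u) ^ 2 - v / (1 + INR k * u).

Definition lin2_inv_f (x : R) : R := (/ (1 - x) ^ k - 1) / INR k.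
Definition lin2_inv_g (x : R) : R := - a * x ^ 2 / (1 - x) ^ k.
Definition lin2_inv_h (x : R) : R := - / (1 - x) ^ k.

Let rho : R := / (4 * INR k * (1 + Rabs a)).

Lemma INR_k_pos : 0 < INR k.
Proof. now apply lt_0_INR. Qed.

Lemma lin2_rho_pos : 0 < rho.
Proof.
  assert (H := Rabs_pos a); assert (Hk' := INR_k_pos).
  unfold rho; apply Rinv_0_lt_compat; nra.
Qed.

Lemma lin2_denominator u v : u ^ 2 + v ^ 2 < rho ^ 2 -> 3 / 4 <= 1 + INR k * u.
Proof.
  intro Huv; destruct (Rabs_lt_of_sum_sq u v rho lin2_rho_pos Huv) as [Hu _].
  apply (one_plus_mul_ge (INR k) u rho); [lra |].
  assert (H := Rabs_pos a); assert (Hk' := INR_k_pos).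
  rewrite Rabs_pos_eq by lra; unfold rho.
  apply (Rmult_le_reg_r (4 * (1 + Rabs a))); [lra |]; field_simplify; lra.
Qed.

Lemma lin2_w_pos u : 0 < lin2_w u.
Proof. apply exp_pos. Qed.

Lemma lin2_w_pow u : 0 < 1 + INR k * u -> lin2_w u ^ k = / (1 + INR k * u).
Proof.
  intro Hu; assert (Hk' := INR_k_pos); unfold lin2_w.
  rewrite <- Rpower_pow, Rpower_mult by apply exp_pos.
  replace (- / INR k * INR k) with (Ropp 1) by (field; lra).
  now rewrite Rpower_Ropp, Rpower_1.
Qed.

Lemma lin2_w_inv x : x < 1 -> lin2_w (lin2_inv_f x) = 1 - x.
Proof.
  intro Hx; assert (Hk' := INR_k_pos); unfold lin2_w, lin2_inv_f.
  replace (1 + INR k * ((/ (1 - x) ^ k - 1) / INR k)) with (Rpower (1 - x) (- INR k)).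
  2: { rewrite Rpower_Ropp, Rpower_pow by lra.
       field; split; [apply pow_nonzero |]; lra. }
  rewrite Rpower_mult; replace (- INR k * - / INR k) with 1 by (field; lra).
  apply Rpower_1; lra.
Qed.

Lemma lin2_solution u0 v0 : u0 ^ 2 + v0 ^ 2 < rho ^ 2 ->
  is_solution P family_Q (fun t => lin2_x (rot_u u0 v0 t) (rot_v u0 v0 t))
                         (fun t => lin2_y (rot_u u0 v0 t) (rot_v u0 v0 t)).
Proof.
  intros Huv t; rewrite <- (rot_norm u0 v0 t) in Huv.
  assert (Hden := lin2_denominator _ _ Huv); assert (Hk' := INR_k_pos).
  assert (Hpow := lin2_w_pow (rot_u u0 v0 t) ltac:(lra)).
  unfold P, family_Q, lin2_x, lin2_y in *.
  replace (1 - (1 - lin2_w (rot_u u0 v0 t))) with (lin2_w (rot_u u0 v0 t)) by ring.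
  rewrite Hpow.
  unfold lin2_w, Rpower, rot_u, rot_v in *.
  split; apply is_derive_Reals; auto_derive; repeat split; try lra; field; lra.
Qed.

Lemma lin2_left_inverse u v : u ^ 2 + v ^ 2 < rho ^ 2 ->
  lin2_inv_f (lin2_x u v) = u /\
  lin2_inv_g (lin2_x u v) + lin2_inv_h (lin2_x u v) * lin2_y u v = v.
Proof.
  intro Huv; assert (Hden := lin2_denominator u v Huv); assert (Hk' := INR_k_pos).
  unfold lin2_inv_f, lin2_inv_g, lin2_inv_h, lin2_y, lin2_x.
  replace (1 - (1 - lin2_w u)) with (lin2_w u) by ring.
  rewrite lin2_w_pow by lra; split; field; lra.
Qed.

Lemma lin2_dot u v : 0 < u ^ 2 + v ^ 2 < rho ^ 2 -> 0 < lin2_x u v * u - lin2_y u v * v.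
Proof.
  intros [Huv0 Huv]; assert (Hden := lin2_denominator u v Huv); assert (Hk' := INR_k_pos).
  set (z := / (1 + INR k * u)).
  assert (Hz : 0 < z <= 4 / 3).
  { unfold z; split; [apply Rinv_0_lt_compat; lra |].
    apply (Rmult_le_reg_r (1 + INR k * u)); [lra |]; field_simplify; lra. }
  destruct (one_sub_pow_factor (lin2_w u) k (lin2_w_pos u) Hk) as [S [HS HSw]].
  rewrite lin2_w_pow in HSw by lra; fold z in HSw.
  (* [1 - z = k u z] turns [1 - w^k = (1 - w) S] into [x = (k z / S) u] *)
  set (m := INR k * z / S).
  assert (Hx : lin2_x u v = m * u).
  { unfold lin2_x, m; apply (Rmult_eq_reg_r S); [| lra].
    rewrite <- HSw; unfold z; field; lra. }
  replace (lin2_x u v * u - lin2_y u v * v) with (m * u * u - (- a * (m * u) ^ 2 - z * v) * v)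
    by (rewrite <- Hx; unfold lin2_y; fold (lin2_x u v); unfold z; field; lra).
  assert (Hm : 0 < m <= 4 / 3 * INR k).
  { unfold m; split; [apply Rdiv_lt_0_compat; nra |].
    apply (Rmult_le_reg_r S); [lra |]; field_simplify; nra. }
  apply rotation_dot_pos; try lra.
  destruct (Rabs_lt_of_sum_sq u v rho lin2_rho_pos Huv) as [_ Hv].
  assert (Ha := Rabs_pos a); assert (Hv0 := Rabs_pos v).
  assert (Hrho : INR k * rho * (1 + Rabs a) = / 4) by (unfold rho; field; split; lra).
  apply Rle_trans with (2 * Rabs a * (4 / 3 * INR k) * rho).
  - apply Rmult_le_compat; nra.
  - nra.
Qed.

Lemma lin2_w_0 : lin2_w 0 = 1.
Proof. unfold lin2_w, Rpower; rewrite Rmult_0_r, Rplus_0_r, ln_1, Rmult_0_r; apply exp_0. Qed.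

Lemma family_isochronous : isochronous_center P family_Q.
Proof.
  assert (Hk' := INR_k_pos).
  apply (isochronous_center_of_linearization _ _ lin2_x lin2_y rho).
  - exact lin2_solution.
  - exact (injective_of_left_inverse lin2_x lin2_y _ _ _ rho lin2_left_inverse).
  - exact lin2_dot.
  - assert (Hhalf : 0 < / 2) by lra.
    apply (cover_of_right_inverse _ _ lin2_inv_f lin2_inv_g lin2_inv_h rho (/ 2)
             lin2_rho_pos Hhalf).
    1, 2: unfold lin2_x, lin2_y; rewrite lin2_w_0; field; lra.
    2-4: apply continuity_pt_of_ex_derive; unfold lin2_inv_f, lin2_inv_g, lin2_inv_h;
      auto_derive; apply pow_nonzero; lra.
    2, 3: unfold lin2_inv_f, lin2_inv_g; rewrite Rminus_0_r, pow1; field; lra.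
    intros x y Hx; unfold lin2_x, lin2_y; rewrite lin2_w_inv by lra.
    assert (Hpow : 0 < (1 - x) ^ k) by (apply pow_lt; lra).
    unfold lin2_inv_f, lin2_inv_g, lin2_inv_h; split; field; lra.
Qed.

Lemma family_zero_urabe : zero_urabe P family_Q.
Proof.
  assert (Hk' := INR_k_pos).
  apply (zero_urabe_intro P family_Q (fun x => - a * x ^ 2 + a * x ^ 3) (fun x => x - 1)
           (fun x => (1 - (1 - x) ^ k) / INR k + 2 * a ^ 2 * x ^ 3 + (INR k - 2) * a ^ 2 * x ^ 4)
           (fun x => 2 * a * x + 2 * (INR k - 1) * a * x ^ 2) (fun _ => INR k)
           (fun x => - 2 * a * x + 3 * a * x ^ 2) (fun _ => 1)
           (fun x => - (INR k + 1) * ln (1 - x))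
           (fun x => (1 - x) * (1 - (1 - x) ^ k) / INR k) (/ 2));
    try (intros; unfold P, family_Q; ring).
  - rewrite Rminus_0_r, pow1; field; lra.
  - lra.
  - intro x; apply is_derive_Reals; auto_derive; [exact I | ring].
  - intro x; apply is_derive_Reals; auto_derive; [exact I | ring].
  - intros x Hx; field; exact Hx.
  - lra.
  - rewrite Rminus_0_r, ln_1; ring.
  - intros x Hx; repeat split.
    + field; lra.
    + apply continuity_pt_of_ex_derive; auto_derive; lra.
    + apply is_derive_Reals; auto_derive; [lra | field; lra].
    + assert (Hpow : (1 - x) ^ k = (1 - x) * (1 - x) ^ Init.Nat.pred k)
        by (rewrite tech_pow_Rmult, Nat.succ_pred_pos by exact Hk; reflexivity).
      apply is_derive_Reals; auto_derive; [exact I |].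
      unfold Rminus in *; rewrite Hpow; field; lra.
  - intros x Hx Hx0.
    destruct (one_sub_pow_factor (1 - x) k ltac:(lra) Hk) as [S [HS HSx]].
    rewrite HSx; replace (x * ((1 - x) * ((1 - (1 - x)) * S) / INR k))
      with (x ^ 2 * ((1 - x) * S / INR k)) by (field; lra).
    apply Rmult_lt_0_compat; [rewrite <- Rsqr_pow2; now apply Rsqr_pos_lt |].
    apply Rdiv_lt_0_compat; [apply Rmult_lt_0_compat |]; lra.
Qed.

End CubicFamily.

Lemma family_isochronous_zero_urabe a k (Q : R -> R -> R) : (0 < k)%nat ->
  (forall x y, family_Q a k x y = Q x y) ->
  isochronous_center_zero_urabe (fun x y => - y + x * y - a * x ^ 2 + a * x ^ 3) Q.
Proof.
  intros Hk HQ; replace Q with (family_Q a k)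
    by (do 2 (apply functional_extensionality; intro); apply HQ).
  split; [exact (family_isochronous a k Hk) | exact (family_zero_urabe a k Hk)].
Qed.

Theorem theorem4p2 : forall b a : R,
  isochronous_center_zero_urabe
    (fun x y => - y + b * x * y + x ^ 2 - b * x ^ 3)
    (fun x y => x + b * y ^ 2 - 2 * x * y + 2 * x ^ 3 - b * x ^ 4) /\
  isochronous_center_zero_urabe
    (fun x y => - y + x * y - a * x ^ 2 + a * x ^ 3)
    (fun x y => x + y ^ 2 + 2 * a * x * y + 2 * a ^ 2 * x ^ 3 - a ^ 2 * x ^ 4) /\
  isochronous_center_zero_urabe
    (fun x y => - y + x * y - a * x ^ 2 + a * x ^ 3)
    (fun x y => x + 3 * y ^ 2 + 2 * a * x * y - x ^ 2 + 4 * a * x ^ 2 * y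
                + (/ 3 + 2 * a ^ 2) * x ^ 3 + a ^ 2 * x ^ 4) /\
  isochronous_center_zero_urabe
    (fun x y => - y + x * y - a * x ^ 2 + a * x ^ 3)
    (fun x y => x + 4 * y ^ 2 + 2 * a * x * y - 3 / 2 * x ^ 2 + 6 * a * x ^ 2 * y
                + (1 + 2 * a ^ 2) * x ^ 3 + (- / 4 + 2 * a ^ 2) * x ^ 4).
Proof.
  intros b a; split; [split; [apply first_system_isochronous | apply first_system_zero_urabe] |].
  split; [| split].
  - apply (family_isochronous_zero_urabe a 1); [lia |].
    intros x y; unfold family_Q; simpl INR; field.
  - apply (family_isochronous_zero_urabe a 3); [lia |].
    intros x y; unfold family_Q; simpl INR; field.
  - apply (family_isochronous_zero_urabe a 4); [lia |].
    intros x y; unfold family_Q; simpl INR; field.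
Qed.
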